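(* Let $\vec{\mathcal{G}}$ be a game graph with Min vertices $[n]$ satisfying assumptions (a)–(c), and assume moreover that every Random vertex has exactly two outgoing edges, each with probability $1/2$, and that every edge outgoing from a Random vertex has a Max vertex as its head. Let $F$ be the operator encoded by $\vec{\mathcal{G}}$, extended to $\mathbb{T}^n$ by the same formula (with $-\infty+a=-\infty$, $\tfrac12\cdot(-\infty)=-\infty$, and only terms with $p^e_w>0$, $p^{e'}_u>0$ kept in the sums). Then $\{x\in\mathbb{T}^n: x\le F(x)\}$ is a tropical Metzler spectrahedral cone, i.e. equals $\mathcal{S}(-\infty\,|\,Q^{(1)},\dots,Q^{(n)})$ for some symmetric tropical Metzler matrices $Q^{(1)},\dots,Q^{(n)}$ (with $Q^{(0)}$ the matrix all of whose entries are $(0,-\infty)$).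
   Context: Game graph: directed graph $(V,E)$, $V=V_{\mathrm{Min}}\uplus V_{\mathrm{Rand}}\uplus V_{\mathrm{Max}}$, $V_{\mathrm{Min}}=[n]$, $V_{\mathrm{Max}}=[m]$ nonempty, each vertex with an outgoing edge; $\mathrm{Out}(v)$ = outgoing edges. Edges with Min/Max tail carry reals $r_e$; edges with Random tail carry rationals $q_e>0$ summing to $1$ at each Random vertex. Assumptions: (a) every path between two Min vertices contains a Max vertex; (b) every path between two Max vertices contains a Min vertex; (c) every Random vertex has a path to a Min or Max vertex. With the Markov chain where Min/Max vertices are absorbing and Random $v$ moves to $w$ with probability $q_{(v,w)}$, $p^e_v$ is the probability of absorption at $v$ starting from the head of $e$. Encoded operator: $F_v(x)=\min_{e\in\mathrm{Out}(v)}\big(r_e+\sum_{w\in[m]}p^e_w\max_{e'\in\mathrm{Out}(w)}(r_{e'}+\sum_{u\in[n]}p^{e'}_u x_u)\big)$. $\mathbb{T}=\mathbb{R}\cup\{-\infty\}$. Signed tropical numbers $\mathbb{S}=(\{\pm1\}\times\mathbb{R})\cup\{(0,-\infty)\}$; $(1,a)$ positive, $(-1,a)$ negative, modulus $|(s,a)|=a$. A matrix over $\mathbb{S}$ is tropical Metzler if its off-diagonal entries are negative or $(0,-\infty)$. For symmetric tropical Metzler $Q^{(0)},\dots,Q^{(N)}\in\mathbb{S}^{m'\times m'}$, with $x_0:=0$ and $x\in\mathbb{T}^N$: $Q^{\pm}_{ii}(x)=\max\{|Q^{(k)}_{ii}|+x_k: Q^{(k)}_{ii}\text{ positive (resp.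 negative)}\}$ ($\max\emptyset=-\infty$), $Q_{ij}(x)=\max_k(|Q^{(k)}_{ij}|+x_k)$ for $i\ne j$; $\mathcal{S}(Q^{(0)}|Q^{(1)},\dots,Q^{(N)})=\{x\in\mathbb{T}^N: Q^+_{ii}(x)\ge Q^-_{ii}(x)\ \forall i,\ Q^+_{ii}(x)+Q^+_{jj}(x)\ge2Q_{ij}(x)\ \forall i\ne j\}$. *)

From HB Require Import structures.
From mathcomp Require Import all_boot all_order all_algebra.
Set Implicit Arguments. Unset Strict Implicit. Unset Printing Implicit Defensive.
Import Order.TTheory GRing.Theory Num.Theory.
Local Open Scope ring_scope.

Section Trop.
Variable R : realFieldType.

Definition Trop := option R.   (* None = -oo *)

Definition Tadd (x y : Trop) : Trop :=
  match x, y with Some a, Some b => Some (a + b) | _, _ => None end.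
Definition Tscale (c : R) (x : Trop) : Trop := omap (fun a => c * a) x.
Definition Tmax (x y : Trop) : Trop :=
  match x, y with
  | None, _ => y | _, None => x | Some a, Some b => Some (Num.max a b) end.
Definition Tmin (x y : Trop) : Trop :=
  match x, y with Some a, Some b => Some (Num.min a b) | _, _ => None end.
Definition Tle (x y : Trop) : bool :=
  match x, y with
  | None, _ => true | Some _, None => false | Some a, Some b => a <= b end.
Definition Tmaxseq (s : seq Trop) : Trop := foldr Tmax None s.
(* min of a finite nonempty sequence (-oo for the empty one, never used) *)
Definition Tminseq (s : seq Trop) : Trop :=
  match s with [::] => None | x :: s' => foldr Tmin x s' end.

Inductive Strop : Type :=
| Spos of R     (* (1, a)  *)
| Sneg of R     (* (-1, a) *)
| Szero.        (* (0, -oo) *)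

Definition Smod (s : Strop) : Trop :=
  match s with Spos a => Some a | Sneg a => Some a | Szero => None end.
Definition Sis_pos (s : Strop) : bool := if s is Spos _ then true else false.
Definition Sis_neg (s : Strop) : bool := if s is Sneg _ then true else false.
Definition Sis_zero (s : Strop) : bool := if s is Szero then true else false.

Definition Ssym (m' : nat) (Q : 'I_m' -> 'I_m' -> Strop) : Prop :=
  forall i j, Q i j = Q j i.
Definition Smetzler (m' : nat) (Q : 'I_m' -> 'I_m' -> Strop) : Prop :=
  forall i j, i != j -> Sis_neg (Q i j) || Sis_zero (Q i j).

(* Q^{+}_{ii}(x) / Q^{-}_{ii}(x), with x_0 := 0 for the matrix Q0 *)
Definition Qdiag (sgn : Strop -> bool) (N m' : nat)
  (Q0 : 'I_m' -> 'I_m' -> Strop) (Qs : 'I_N -> 'I_m' -> 'I_m' -> Strop)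
  (x : 'I_N -> Trop) (i : 'I_m') : Trop :=
  Tmax (if sgn (Q0 i i) then Tadd (Smod (Q0 i i)) (Some 0) else None)
       (\big[Tmax/None]_(k | sgn (Qs k i i)) Tadd (Smod (Qs k i i)) (x k)).

Definition Qoff (N m' : nat)
  (Q0 : 'I_m' -> 'I_m' -> Strop) (Qs : 'I_N -> 'I_m' -> 'I_m' -> Strop)
  (x : 'I_N -> Trop) (i j : 'I_m') : Trop :=
  Tmax (Tadd (Smod (Q0 i j)) (Some 0))
       (\big[Tmax/None]_k Tadd (Smod (Qs k i j)) (x k)).

Definition in_spec (N m' : nat)
  (Q0 : 'I_m' -> 'I_m' -> Strop) (Qs : 'I_N -> 'I_m' -> 'I_m' -> Strop)
  (x : 'I_N -> Trop) : Prop :=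
  (forall i, Tle (Qdiag Sis_neg Q0 Qs x i) (Qdiag Sis_pos Q0 Qs x i)) /\
  (forall i j, i != j ->
     Tle (Tadd (Qoff Q0 Qs x i j) (Qoff Q0 Qs x i j))
         (Tadd (Qdiag Sis_pos Q0 Qs x i) (Qdiag Sis_pos Q0 Qs x j))).
End Trop.

Arguments Szero {R}.

Definition vtx (n nr m : nat) : finType := (('I_n + 'I_nr) + 'I_m)%type.

Definition vmin {n nr m} (i : 'I_n) : vtx n nr m := inl (inl i).
Definition vrand {n nr m} (j : 'I_nr) : vtx n nr m := inl (inr j).
Definition vmax {n nr m} (w : 'I_m) : vtx n nr m := inr w.

Definition is_min {n nr m} (v : vtx n nr m) : bool :=
  match v with inl (inl _) => true | _ => false end.
Definition is_rand {n nr m} (v : vtx n nr m) : bool :=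
  match v with inl (inr _) => true | _ => false end.
Definition is_max {n nr m} (v : vtx n nr m) : bool :=
  match v with inr _ => true | _ => false end.

(* E : edge relation; q : probabilities on edges with Random tail. *)
Definition game_graph (n nr m : nat) (E : rel (vtx n nr m))
  (q : vtx n nr m -> vtx n nr m -> rat) : Prop :=
  [/\ ((0 < n)%N /\ (0 < m)%N),
      (forall v, exists w, E v w),
      (forall v w, is_rand v -> E v w -> 0 < q v w),
      (forall v, is_rand v -> \sum_(w | E v w) q v w = 1) &
  [/\ (* (a) every path between two Min vertices contains a Max vertex *)
      (forall v s, is_min v -> s != [::] -> path E v s -> is_min (last v s) ->
                   has is_max s),
      (* (b) every path between two Max vertices contains a Min vertex *)
      (forall v s, is_max v -> s != [::] -> path E v s -> is_max (last v s) ->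
                   has is_min s) &
      (* (c) every Random vertex has a path to a Min or Max vertex *)
      (forall v, is_rand v -> exists s, (path E v s && ~~ is_rand (last v s)))]].

(* p h w = probability of absorption at w, starting at h, in the Markov chain
   where Min/Max vertices are absorbing and Random v moves to w w.p. q v w.
   Characterized by the (first-step) absorption equations; under (c) this
   linear system has a unique solution. p^e_w := p (head e) w. *)
Definition absorption (n nr m : nat) (E : rel (vtx n nr m))
  (q p : vtx n nr m -> vtx n nr m -> rat) : Prop :=
  forall h w, p h w = if is_rand h then \sum_(v | E h v) q h v * p v w
                      else (h == w)%:R.

Definition Fop (R : realFieldType) (n nr m : nat) (E : rel (vtx n nr m))
  (r : vtx n nr m -> vtx n nr m -> R) (p : vtx n nr m -> vtx n nr m -> rat)
  (x : 'I_n -> Trop R) (i : 'I_n) : Trop R :=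
  Tminseq
    [seq Tadd (Some (r (vmin i) h))
        (\big[@Tadd R/Some 0]_(w : 'I_m | 0 < p h (vmax w))
            Tscale (ratr (p h (vmax w)))
              (Tmaxseq
                 [seq Tadd (Some (r (vmax w) h'))
                     (\big[@Tadd R/Some 0]_(u : 'I_n | 0 < p h' (vmin u))
                         Tscale (ratr (p h' (vmin u))) (x u))
                 | h' <- enum (vtx n nr m) & E (vmax w) h']))
    | h <- enum (vtx n nr m) & E (vmin i) h].

From HB Require Import structures.
From mathcomp Require Import all_boot all_order all_algebra.
From mathcomp Require Import lra.
Set Implicit Arguments. Unset Strict Implicit. Unset Printing Implicit Defensive.
Import Order.TTheory GRing.Theory Num.Theory.
Local Open Scope ring_scope.

(* By (a) and the hypothesis on Random vertices, a Min vertex i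
   moves either to a Max vertex w or to a Random vertex with exactly two Max
   successors w1 != w2; by (b) a Max vertex w moves only to Min vertices, so
   its value is the tropical linear form G_w(x) = max_u (r_wu + x_u).  Hence
   x <= F(x) is the conjunction, over the edges i -> h, of
   2 x_i <= (r_ih + G_w1(x)) + (r_ih + G_w2(x)), with w1 = w2 = w when h = w
   is a Max vertex.  Each of these is the 2x2 minor condition of the tropical
   Metzler matrix [[r_ih + G_w1(x), -x_i], [-x_i, r_ih + G_w2(x)]], and a
   block diagonal matrix of such blocks is in the cone iff every block is. *)

Section TropicalArithmetic.
Variable R : realFieldType.
Implicit Types (x y z : Trop R) (a c : R).

Lemma TaddA : associative (@Tadd R).
Proof. by case=> [a|] [b|] [c|] //=; rewrite addrA. Qed.
Lemma TaddC : commutative (@Tadd R).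
Proof. by case=> [a|] [b|] //=; rewrite addrC. Qed.
Lemma Tadd0 : left_id (Some 0) (@Tadd R).
Proof. by case=> [a|] //=; rewrite add0r. Qed.
HB.instance Definition _ :=
  Monoid.isComLaw.Build (Trop R) (Some 0) (@Tadd R) TaddA TaddC Tadd0.

Lemma TmaxA : associative (@Tmax R).
Proof. by case=> [a|] [b|] [c|] //=; rewrite maxA. Qed.
Lemma TmaxC : commutative (@Tmax R).
Proof. by case=> [a|] [b|] //=; rewrite maxC. Qed.
Lemma Tmax0 : left_id None (@Tmax R).
Proof. by case. Qed.
HB.instance Definition _ :=
  Monoid.isComLaw.Build (Trop R) None (@Tmax R) TmaxA TmaxC Tmax0.

Lemma Tadd_Tmaxr c : {morph Tadd (Some c) : y z / Tmax y z}.
Proof. by case=> [a|] [b|] //=; rewrite addr_maxr. Qed.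

Lemma Tscale1 y : Tscale (ratr (1 : rat)) y = y.
Proof. by case: y => [a|] //=; rewrite rmorph1 mul1r. Qed.

Lemma Tmaxseq_big s : Tmaxseq s = \big[@Tmax R/None]_(y <- s) y.
Proof. by elim: s => [|y s IHs]; rewrite ?big_nil ?big_cons //= IHs. Qed.

Lemma Tle_min x y z : Tle x (Tmin y z) = Tle x y && Tle x z.
Proof. by case: x y z => [a|] [b|] [c|] //=; rewrite ?andbF // le_min. Qed.

Lemma Tle_minseq x s : s != [::] -> Tle x (Tminseq s) = all (Tle x) s.
Proof.
case: s => [|y s] //= _; elim: s => [|z s IHs] /=; first by rewrite andbT.
by rewrite Tle_min IHs andbCA.
Qed.

Lemma Tle_double x y : Tle (Tadd x x) (Tadd y y) = Tle x y.
Proof. by case: x y => [a|] [b|] //=; apply/idP/idP => ?; lra. Qed.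

Lemma Tle_add_mean x c y z :
  Tle x (Tadd (Some c) (Tadd (Tscale (ratr (2%:R^-1 : rat)) y)
                             (Tscale (ratr (2%:R^-1 : rat)) z)))
  = Tle (Tadd x x) (Tadd (Tadd (Some c) y) (Tadd (Some c) z)).
Proof.
case: x y z => [a|] [b|] [d|] //=.
by rewrite fmorphV /= ratr_nat; apply/idP/idP => ?; lra.
Qed.

End TropicalArithmetic.

Section RankTwoSpectrahedralCone.
Variables (R : realFieldType) (N : nat) (J : finType).
Variables (piv : J -> 'I_N) (a b : J -> 'I_N -> Trop R).

Definition Tlin (c : 'I_N -> Trop R) (x : 'I_N -> Trop R) : Trop R :=
  \big[@Tmax R/None]_k Tadd (c k) (x k).

Definition Spos_of (c : Trop R) : Strop R := if c is Some v then Spos v else Szero.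

Let coef (s : J * bool) : 'I_N -> Trop R := if s.2 then b s.1 else a s.1.

(* One 2x2 block per j, on the indices (j, false) and (j, true): its diagonal
   holds the tropical linear forms a j and b j, its off-diagonal entry the
   variable x (piv j) with a negative sign. *)
Definition block_Q (k : 'I_N) (s t : J * bool) : Strop R :=
  if s == t then Spos_of (coef s k)
  else if (s.1 == t.1) && (k == piv s.1) then Sneg 0 else Szero.

Definition block_spec_Q (k : 'I_N) (i j : 'I_#|{: J * bool}|) : Strop R :=
  block_Q k (enum_val i) (enum_val j).

Lemma block_spec_Q_sym k : Ssym (block_spec_Q k).
Proof.
move=> i j; rewrite /block_spec_Q /block_Q eq_sym.
by case: eqP => [-> | _]; rewrite // eq_sym; case: eqP => // ->.
Qed.

Lemma block_spec_Q_metzler k : Smetzler (block_spec_Q k).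
Proof.
move=> i j nij; rewrite /block_spec_Q /block_Q (inj_eq enum_val_inj) (negbTE nij).
by case: ifP.
Qed.

Section Entries.
Variable x : 'I_N -> Trop R.

Lemma block_Q_diag_neg s :
  \big[@Tmax R/None]_(k | Sis_neg (block_Q k s s)) Tadd (Smod (block_Q k s s)) (x k)
  = None.
Proof. by rewrite big_pred0 // => k; rewrite /block_Q eqxx; case: (coef s k). Qed.

Lemma block_Q_diag_pos s :
  \big[@Tmax R/None]_(k | Sis_pos (block_Q k s s)) Tadd (Smod (block_Q k s s)) (x k)
  = Tlin (coef s) x.
Proof.
rewrite big_mkcond; apply: eq_bigr => k _.
by rewrite /block_Q eqxx; case: (coef s k).
Qed.

Lemma block_Q_off s t : s != t ->
  \big[@Tmax R/None]_k Tadd (Smod (block_Q k s t)) (x k)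
  = if s.1 == t.1 then x (piv s.1) else None.
Proof.
rewrite /block_Q => /negbTE ->; case: eqP => [_ | _]; last by rewrite big1.
rewrite (bigD1 (piv s.1)) //= eqxx big1 => [|k /negbTE -> //].
by case: (x _) => //= v; rewrite add0r.
Qed.

End Entries.

Lemma in_block_spec x :
  in_spec (fun _ _ => Szero) block_spec_Q x <->
  (forall j, Tle (Tadd (x (piv j)) (x (piv j))) (Tadd (Tlin (a j) x) (Tlin (b j) x))).
Proof.
rewrite /in_spec /Qdiag /Qoff /block_spec_Q /=; split.
- case=> _ minorsP j; pose s := (j, false); pose t := (j, true).
  have nst : s != t by rewrite xpair_eqE eqxx.
  have := minorsP (enum_rank s) (enum_rank t).
  rewrite (inj_eq enum_rank_inj) nst !enum_rankK block_Q_off // !block_Q_diag_pos.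
  by rewrite eqxx => /(_ isT).
- move=> blockP; split=> [i | i i' nii']; first by rewrite block_Q_diag_neg.
  have nst : enum_val i != enum_val i' by rewrite (inj_eq enum_val_inj).
  rewrite block_Q_off // !block_Q_diag_pos.
  move: nst; case: (enum_val i) => j c; case: (enum_val i') => j' c' /=.
  have [<- | //] := eqVneq j j'; rewrite /coef /=.
  by case: c; case: c'; rewrite ?eqxx //= => _; rewrite TaddC.
Qed.

End RankTwoSpectrahedralCone.

Section Game.
Variables (R : realFieldType) (n nr m : nat).
Local Notation V := (vtx n nr m).
Variables (E : rel V) (q : V -> V -> rat) (r : V -> V -> R) (p : V -> V -> rat).
Hypotheses (gameE : game_graph E q) (absorbP : absorption E q p).
Hypothesis randE : forall v, is_rand v ->
  #|[pred w | E v w]| = 2%N /\ (forall w, E v w -> q v w = 2%:R^-1 /\ is_max w).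

Lemma vmin_inj : injective (@vmin n nr m).
Proof. by move=> u u' []. Qed.

Lemma vmax_inj : injective (@vmax n nr m).
Proof. by move=> w w' []. Qed.

Lemma big_vtx_min (T : Type) (idx : T) (op : Monoid.com_law idx)
    (P : pred V) (F : V -> T) :
  (forall v, P v -> is_min v) ->
  \big[op/idx]_(v | P v) F v = \big[op/idx]_(u | P (vmin u)) F (vmin u).
Proof.
move=> minP; rewrite !big_sumType.
rewrite [\big[_/_]_(j : 'I_nr | _) _]big1 => [|j /minP //].
by rewrite [\big[_/_]_(w : 'I_m | _) _]big1 => [|w /minP //]; rewrite !Monoid.mulm1.
Qed.

Lemma min_succ_not_min i v : E (vmin i) v -> ~~ is_min v.
Proof.
case: gameE => _ _ _ _ [pathminE _ _] Eiv; apply/negP => minv.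
have := pathminE (vmin i) [:: v] isT isT; rewrite /= Eiv minv => /(_ isT isT).
by case: v {Eiv} minv => [[]|].
Qed.

Lemma max_succ_min w v : E (vmax w) v -> is_min v.
Proof.
case: gameE => _ succE _ _ [_ pathmaxE _].
case: v => [[u | j] | w'] Ewv //.
- have [v' Ejv'] := succE (vrand j).
  have [_ /(_ _ Ejv') [_ maxv']] := @randE (vrand j) isT.
  have := pathmaxE (vmax w) [:: vrand j; v'] isT isT.
  rewrite /= Ewv Ejv' maxv' => /(_ isT isT).
  by case: v' {Ejv'} maxv' => [[]|].
- by have := pathmaxE (vmax w) [:: vmax w'] isT isT; rewrite /= Ewv => /(_ isT isT).
Qed.

Lemma rand_succ h : is_rand h ->
  exists w1 w2, [/\ w1 != w2, E h (vmax w1) & E h (vmax w2)].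
Proof.
move=> randh; have [card2 succ_max] := randE randh.
have /cards2P [v1 [v2 [nv12 succ12]]] : #|[set v | E h v]| == 2%N.
  by rewrite cardsE card2.
have succv v : E h v = (v == v1) || (v == v2).
  by rewrite -in_set2 -succ12 inE.
have /succ_max [_ /= max1] : E h v1 by rewrite succv eqxx.
have /succ_max [_ /= max2] : E h v2 by rewrite succv eqxx orbT.
case: v1 max1 nv12 succv {succ12} => [//|w1] _.
case: v2 max2 => [//|w2] _ nw12 succv.
by exists w1, w2; rewrite !succv !eqxx orbT (inj_eq vmax_inj).
Qed.

Lemma rand_succE h w1 w2 : is_rand h -> w1 != w2 ->
  E h (vmax w1) -> E h (vmax w2) -> forall w, E h (vmax w) = (w == w1) || (w == w2).
Proof.
move=> randh nw12 E1 E2 w; have [card2 _] := randE randh.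
have succ12 : [set vmax w1; vmax w2] = [set v | E h v] :> {set V}.
  apply/eqP; rewrite eqEcard cards2 (inj_eq vmax_inj) nw12 cardsE card2 leqnn andbT.
  by apply/subsetP => v; rewrite !inE => /orP[] /eqP ->.
have -> : E h (vmax w) = (vmax w \in [set v | E h v]) by rewrite inE.
by rewrite -succ12 in_set2 !(inj_eq vmax_inj).
Qed.

Lemma absorption_absorbing v w : ~~ is_rand v -> p v w = (v == w)%:R.
Proof. by move=> nrandv; rewrite absorbP (negbTE nrandv). Qed.

Lemma absorption_rand h w : is_rand h -> p h (vmax w) = (E h (vmax w))%:R / 2%:R.
Proof.
move=> randh; have [_ succ_half] := randE randh; rewrite absorbP randh.
rewrite (eq_bigr (fun v : V => (2%:R^-1 : rat) * (v == vmax w)%:R)); last first.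
  move=> v Ehv; have [-> maxv] := succ_half v Ehv; rewrite absorption_absorbing //.
  by case: v maxv {Ehv}.
rewrite -mulr_sumr mulrC; congr (_ * _).
case Ehw: (E h (vmax w)).
  by rewrite (bigD1 (vmax w)) //= eqxx big1 ?addr0 // => v /andP[_ /negbTE ->].
by rewrite big1 // => v Ehv; case: eqP Ehv => // ->; rewrite Ehw.
Qed.

Lemma big_absorption_absorbing (I : finType) (emb : I -> V) (f : I -> Trop R) i0 :
  injective emb -> ~~ is_rand (emb i0) ->
  \big[@Tadd R/Some 0]_(u | 0 < p (emb i0) (emb u))
     Tscale (ratr (p (emb i0) (emb u))) (f u) = f i0.
Proof.
move=> emb_inj nrand; have p_emb u : p (emb i0) (emb u) = (i0 == u)%:R.
  by rewrite absorption_absorbing // (inj_eq emb_inj).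
rewrite (big_pred1_id _ _ (i := i0)) => [|u]; last first.
  by rewrite /= p_emb eq_sym; case: (u == i0); rewrite ?ltr01 ?ltxx.
by rewrite p_emb eqxx Tscale1 TaddC Tadd0.
Qed.

Definition gain (c : R) (w : 'I_m) (u : 'I_n) : Trop R :=
  if E (vmax w) (vmin u) then Some (c + r (vmax w) (vmin u)) else None.

(* The 2x2 minors of the cone: [(i, h, w, w)] for an edge from [i] to a Max
   vertex [h = w], and [(i, h, w1, w2)], [w1 != w2], for an edge from [i] to a
   Random vertex [h] with successors [w1], [w2]. *)
Definition active (t : 'I_n * V * 'I_m * 'I_m) : bool :=
  let: (i, h, w1, w2) := t in
  E (vmin i) h && ((h == vmax w1) && (w1 == w2) ||
                   [&& is_rand h, w1 != w2, E h (vmax w1) & E h (vmax w2)]).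

Section Values.
Variable x : 'I_n -> Trop R.

Definition max_value (w : 'I_m) : Trop R :=
  Tmaxseq
    [seq Tadd (Some (r (vmax w) h))
        (\big[@Tadd R/Some 0]_(u : 'I_n | 0 < p h (vmin u))
            Tscale (ratr (p h (vmin u))) (x u))
    | h <- enum V & E (vmax w) h].

Definition succ_value (h : V) : Trop R :=
  \big[@Tadd R/Some 0]_(w : 'I_m | 0 < p h (vmax w))
     Tscale (ratr (p h (vmax w))) (max_value w).

Lemma Fop_succ_value i : Fop E r p x i =
  Tminseq [seq Tadd (Some (r (vmin i) h)) (succ_value h) | h <- enum V & E (vmin i) h].
Proof. by []. Qed.

Lemma Tlin_gain c w : Tlin (gain c w) x = Tadd (Some c) (max_value w).
Proof.
rewrite /max_value Tmaxseq_big big_map big_filter big_enum_cond.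
rewrite (big_vtx_min _ _ (@max_succ_min w)) (big_endo _ (Tadd_Tmaxr c)) //.
rewrite /Tlin [RHS]big_mkcond; apply: eq_bigr => u _; rewrite /gain; case: ifP => // _.
rewrite (big_absorption_absorbing (i0 := u) _ vmin_inj) //.
by case: (x u) => //= a; rewrite addrA.
Qed.

Lemma succ_value_max w : succ_value (vmax w) = max_value w.
Proof. exact: big_absorption_absorbing vmax_inj _. Qed.

Lemma succ_value_rand h w1 w2 : is_rand h -> w1 != w2 ->
  E h (vmax w1) -> E h (vmax w2) ->
  succ_value h = Tadd (Tscale (ratr (2%:R^-1 : rat)) (max_value w1))
                      (Tscale (ratr (2%:R^-1 : rat)) (max_value w2)).
Proof.
move=> randh nw12 E1 E2; have succE := rand_succE randh nw12 E1 E2.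
have p_half w : p h (vmax w) = ((w == w1) || (w == w2))%:R / 2%:R.
  by rewrite absorption_rand // succE.
rewrite /succ_value (eq_bigl (fun w => (w == w1) || (w == w2))) => [|w]; last first.
  by rewrite p_half; case: (_ || _); rewrite ?mul0r ?ltxx // mul1r invr_gt0 ltr0n.
have nw21 : w2 != w1 by rewrite eq_sym.
rewrite (bigD1 w1) ?eqxx // (bigD1 w2) ?eqxx ?orbT //= big_pred0 => [|w].
  by rewrite !p_half !eqxx orbT /= mul1r [Tadd _ (Some 0)]TaddC Tadd0.
by case: (w == w1); case: (w == w2).
Qed.

Lemma edge_subsolution i h : E (vmin i) h ->
  Tle (x i) (Tadd (Some (r (vmin i) h)) (succ_value h)) <->
  (forall w1 w2, active (i, h, w1, w2) ->
     Tle (Tadd (x i) (x i))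
         (Tadd (Tlin (gain (r (vmin i) h) w1) x) (Tlin (gain (r (vmin i) h) w2) x))).
Proof.
rewrite /active => Eih; rewrite Eih /=.
case: h Eih => [[u | j] | w] Eih.
- by have := min_succ_not_min Eih.
- have [w1 [w2 [nw12 E1 E2]]] := rand_succ (h := vrand j) isT.
  split=> [le_x w1' w2' /= /and3P [nw12' E1' E2'] | le_x].
    by rewrite !Tlin_gain -Tle_add_mean -(succ_value_rand (h := vrand j)).
  have := le_x w1 w2; rewrite nw12 E1 E2 !Tlin_gain -Tle_add_mean.
  by rewrite -(succ_value_rand (h := vrand j)) //; apply.
- rewrite succ_value_max; split=> [le_x w1 w2 | le_x].
    rewrite (inj_eq vmax_inj) orbF => /andP [/eqP <- /eqP <-].
    by rewrite Tlin_gain Tle_double.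
  by have := le_x w w; rewrite !eqxx Tlin_gain Tle_double; apply.
Qed.

Local Notation Active := {t : 'I_n * V * 'I_m * 'I_m | active t}.

Definition active_min (j : Active) : 'I_n := (val j).1.1.1.

Definition active_gain (second : bool) (j : Active) : 'I_n -> Trop R :=
  let: (i, h, w1, w2) := val j in gain (r (vmin i) h) (if second then w2 else w1).

Lemma subsolution_iff_active :
  (forall i, Tle (x i) (Fop E r p x i)) <->
  (forall j : Active, Tle (Tadd (x (active_min j)) (x (active_min j)))
     (Tadd (Tlin (active_gain false j) x) (Tlin (active_gain true j) x))).
Proof.
have succ_nil i :
    [seq Tadd (Some (r (vmin i) h)) (succ_value h) | h <- enum V & E (vmin i) h] != [::].
  case: gameE => _ succE _ _ _; have [v Eiv] := succE (vmin i).
  rewrite -size_eq0 size_map size_filter -lt0n -has_count.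
  by apply/hasP; exists v; rewrite ?mem_enum.
split=> [le_x [[[[i h] w1] w2] act] | le_cond i] /=.
- have Eih : E (vmin i) h by case/andP: act.
  apply: (edge_subsolution Eih).1 act.
  have := le_x i; rewrite Fop_succ_value Tle_minseq // all_map all_filter.
  by move=> /allP /(_ h (mem_enum _ _)) /implyP; apply.
- rewrite Fop_succ_value Tle_minseq // all_map all_filter; apply/allP => h _ /=.
  apply/implyP => Eih; apply/(edge_subsolution Eih) => w1 w2 act.
  exact: (le_cond (exist _ (i, h, w1, w2) act)).
Qed.

End Values.

End Game.

Theorem mainTheorem13 (R : realFieldType) (n nr m : nat)
  (E : rel (vtx n nr m)) (q : vtx n nr m -> vtx n nr m -> rat)
  (r : vtx n nr m -> vtx n nr m -> R) (p : vtx n nr m -> vtx n nr m -> rat) :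
  game_graph E q ->
  absorption E q p ->
  (forall v, is_rand v ->
     #|[pred w | E v w]| = 2%N /\
     (forall w, E v w -> q v w = 2%:R^-1 /\ is_max w)) ->
  exists (m' : nat) (Q : 'I_n -> 'I_m' -> 'I_m' -> Strop R),
    (forall k, Ssym (Q k)) /\ (forall k, Smetzler (Q k)) /\
    (forall x : 'I_n -> Trop R,
       (forall i, Tle (x i) (Fop E r p x i)) <->
       in_spec (fun _ _ => Szero) Q x).
Proof.
move=> gameE absorbP randE.
exists #|{: {t | active E t} * bool}|.
exists (block_spec_Q (active_min (E := E)) (active_gain r false) (active_gain r true)).
split=> [k | ]; first exact: block_spec_Q_sym.
split=> [k | x]; first exact: block_spec_Q_metzler.
by rewrite (subsolution_iff_active r gameE absorbP randE) in_block_spec.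
Qed.
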